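(* (Progress for $\lambda_{\mathrm{ch}}$ terms.) Assume $\Gamma$ is empty or only contains channel references $a_i : \mathsf{Chan}(A_i)$ (for names $a_i$). If $\Gamma \vdash M : A$, then either: (1) $M = \mathbf{return}\ V$ for some value $V$; or (2) $M$ can be written $E[M']$ for an evaluation context $E$, where $M'$ is a communication or concurrency primitive, i.e. $M'$ is of the form $\mathbf{give}\ V\ W$, $\mathbf{take}\ V$, $\mathbf{fork}\ N$, or $\mathbf{newCh}$; or (3) there exists some $M'$ such that $M \longrightarrow_{\mathsf{M}} M'$.
   Context: The calculus $\lambda_{\mathrm{ch}}$. Types: $A,B ::= \mathbf{1} \mid A \to B \mid \mathsf{Chan}(A)$. The symbol $\alpha$ ranges over variables $x$ and runtime names $a$. Values: $V,W ::= \alpha \mid \lambda x.M \mid ()$. Computations: $M,N ::= V\,W \mid \mathbf{let}\ x \Leftarrow M\ \mathbf{in}\ N \mid \mathbf{return}\ V \mid \mathbf{fork}\ M \mid \mathbf{give}\ V\ W \mid \mathbf{take}\ V \mid \mathbf{newCh}$. A typing environment $\Gamma$ maps variables and names to types. Value typing $\Gamma \vdash V : A$: if $\alpha : A \in \Gamma$ then $\Gamma \vdash \alpha : A$; if $\Gamma, x:A \vdash M : B$ then $\Gamma \vdash \lambda x.M : A \to B$; $\Gamma \vdash () : \mathbf{1}$. Computation typing $\Gamma \vdash M : A$: if $\Gamma \vdash V : A \to B$ and $\Gamma \vdash W : A$ then $\Gamma \vdash V\,W : B$; if $\Gamma \vdash M : A$ and $\Gamma, x:A \vdash N : B$ then $\Gamma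 \vdash \mathbf{let}\ x \Leftarrow M\ \mathbf{in}\ N : B$; if $\Gamma \vdash V : A$ then $\Gamma \vdash \mathbf{return}\ V : A$; if $\Gamma \vdash V : A$ and $\Gamma \vdash W : \mathsf{Chan}(A)$ then $\Gamma \vdash \mathbf{give}\ V\ W : \mathbf{1}$; if $\Gamma \vdash V : \mathsf{Chan}(A)$ then $\Gamma \vdash \mathbf{take}\ V : A$; if $\Gamma \vdash M : \mathbf{1}$ then $\Gamma \vdash \mathbf{fork}\ M : \mathbf{1}$; $\Gamma \vdash \mathbf{newCh} : \mathsf{Chan}(A)$ for any $A$. Evaluation contexts: $E ::= [\,] \mid \mathbf{let}\ x \Leftarrow E\ \mathbf{in}\ M$. Term reduction $\longrightarrow_{\mathsf{M}}$ is the least relation with $(\lambda x.M)\,V \longrightarrow_{\mathsf{M}} M\{V/x\}$, $\mathbf{let}\ x \Leftarrow \mathbf{return}\ V\ \mathbf{in}\ M \longrightarrow_{\mathsf{M}} M\{V/x\}$, and $E[M_1] \longrightarrow_{\mathsf{M}} E[M_2]$ whenever $M_1 \longrightarrow_{\mathsf{M}} M_2$. *)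

From Stdlib Require Import List PeanoNat.
Import ListNotations.

Inductive ty : Type :=
| TUnit : ty
| TArr : ty -> ty -> ty
| TChan : ty -> ty.

Inductive atom : Type :=
| AVar : nat -> atom
| AName : nat -> atom.

Inductive value : Type :=
| VAtom : atom -> value
| VLam : nat -> comp -> value
| VUnit : value
with comp : Type :=
| CApp : value -> value -> comp
| CLet : nat -> comp -> comp -> comp
| CReturn : value -> comp
| CFork : comp -> comp
| CGive : value -> value -> comp
| CTake : value -> comp
| CNewCh : comp.

Definition atom_eqb (a b : atom) : bool :=
  match a, b with
  | AVar x, AVar y => Nat.eqb x y
  | AName x, AName y => Nat.eqb x y
  | _, _ => false
  end.

Definition env := list (atom * ty).

Fixpoint lookup (G : env) (a : atom) : option ty :=
  match G with
  | [] => None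
  | (b, A) :: G' => if atom_eqb a b then Some A else lookup G' a
  end.

Inductive vtyped : env -> value -> ty -> Prop :=
| T_Atom : forall G al A, lookup G al = Some A -> vtyped G (VAtom al) A
| T_Lam : forall G x M A B, ctyped ((AVar x, A) :: G) M B -> vtyped G (VLam x M) (TArr A B)
| T_Unit : forall G, vtyped G VUnit TUnit
with ctyped : env -> comp -> ty -> Prop :=
| T_App : forall G V W A B, vtyped G V (TArr A B) -> vtyped G W A -> ctyped G (CApp V W) B
| T_Let : forall G x M N A B, ctyped G M A -> ctyped ((AVar x, A) :: G) N B ->
    ctyped G (CLet x M N) B
| T_Return : forall G V A, vtyped G V A -> ctyped G (CReturn V) A
| T_Give : forall G V W A, vtyped G V A -> vtyped G W (TChan A) -> ctyped G (CGive V W) TUnit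
| T_Take : forall G V A, vtyped G V (TChan A) -> ctyped G (CTake V) A
| T_Fork : forall G M, ctyped G M TUnit -> ctyped G (CFork M) TUnit
| T_NewCh : forall G A, ctyped G CNewCh (TChan A).

Fixpoint vsubst (V : value) (x : nat) (U : value) : value :=
  match U with
  | VAtom (AVar y) => if Nat.eqb x y then V else U
  | VAtom (AName _) => U
  | VLam y M => if Nat.eqb x y then U else VLam y (csubst V x M)
  | VUnit => VUnit
  end
with csubst (V : value) (x : nat) (M : comp) : comp :=
  match M with
  | CApp U W => CApp (vsubst V x U) (vsubst V x W)
  | CLet y M1 N => CLet y (csubst V x M1) (if Nat.eqb x y then N else csubst V x N)
  | CReturn U => CReturn (vsubst V x U)
  | CFork N => CFork (csubst V x N)
  | CGive U W => CGive (vsubst V x U) (vsubst V x W)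
  | CTake U => CTake (vsubst V x U)
  | CNewCh => CNewCh
  end.

Inductive ectx : Type :=
| EHole : ectx
| ELet : nat -> ectx -> comp -> ectx.

Fixpoint plug (E : ectx) (M : comp) : comp :=
  match E with
  | EHole => M
  | ELet x E' N => CLet x (plug E' M) N
  end.

Inductive mstep : comp -> comp -> Prop :=
| S_Beta : forall x M V, mstep (CApp (VLam x M) V) (csubst V x M)
| S_Let : forall x V M, mstep (CLet x (CReturn V) M) (csubst V x M)
| S_Ctx : forall E M1 M2, mstep M1 M2 -> mstep (plug E M1) (plug E M2).

Definition is_prim (M : comp) : Prop :=
  (exists V W, M = CGive V W) \/ (exists V, M = CTake V) \/
  (exists N, M = CFork N) \/ M = CNewCh.

Definition chan_only_env (G : env) : Prop :=
  forall b, In b G -> exists a A, b = (AName a, TChan A).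

(* Since the environment contains only
   channel names, a closed value of function type must be a lambda, so every
   application beta-reduces; a [let] either reduces its bound computation,
   performs the let-step when that computation is a [return], or exposes a
   primitive under the enlarged evaluation context. *)

From Stdlib Require Import List PeanoNat.

Lemma atom_eqb_eq (a b : atom) : atom_eqb a b = true -> a = b.
Proof.
  destruct a as [x | x], b as [y | y]; simpl; intros H; try discriminate;
    apply Nat.eqb_eq in H; subst; reflexivity.
Qed.

Lemma lookup_In (G : env) (a : atom) (A : ty) : lookup G a = Some A -> In (a, A) G.
Proof.
  induction G as [| [b B] G IH]; simpl; intros H; [discriminate |].
  destruct (atom_eqb a b) eqn:Hab.
  - injection H as <-. apply atom_eqb_eq in Hab. subst. now left.
  - right. now apply IH.
Qed.

Lemma chan_only_lookup (G : env) (a : atom) (A : ty) :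
  chan_only_env G -> lookup G a = Some A -> exists B, A = TChan B.
Proof.
  intros HG H.
  destruct (HG _ (lookup_In _ _ _ H)) as [n [B HB]].
  injection HB as _ ->. eauto.
Qed.

Lemma chan_only_vtyped_arr (G : env) (V : value) (A B : ty) :
  chan_only_env G -> vtyped G V (TArr A B) -> exists x M, V = VLam x M.
Proof.
  intros HG H. inversion H; subst.
  - destruct (chan_only_lookup _ _ _ HG H0) as [C HC]. discriminate.
  - eauto.
Qed.

Lemma mstep_let (x : nat) (M M' N : comp) :
  mstep M M' -> mstep (CLet x M N) (CLet x M' N).
Proof. exact (S_Ctx (ELet x EHole N) M M'). Qed.

Lemma prim_plug_hole (M : comp) :
  is_prim M -> exists E M', M = plug E M' /\ is_prim M'.
Proof. intros H. now exists EHole, M. Qed.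

Theorem lemma2 (G : env) (M : comp) (A : ty) :
  chan_only_env G -> ctyped G M A ->
  (exists V, M = CReturn V) \/
  (exists E M', M = plug E M' /\ is_prim M') \/
  (exists M', mstep M M').
Proof.
  intros HG H. induction H.
  - destruct (chan_only_vtyped_arr _ _ _ _ HG H) as [y [N ->]].
    right; right. eexists. apply S_Beta.
  - right. destruct (IHctyped1 HG) as [[V ->] | [[E [M' [-> HP]]] | [M' HS]]].
    + right. eexists. apply S_Let.
    + left. now exists (ELet x E N), M'.
    + right. exists (CLet x M' N). now apply mstep_let.
  - left. eauto.
  - right; left. apply prim_plug_hole. left. eauto.
  - right; left. apply prim_plug_hole. right; left. eauto.
  - right; left. apply prim_plug_hole. right; right; left. eauto.
  - right; left. apply prim_plug_hole. now right; right; right.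
Qed.
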